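(* Let $d\ge1$, $n\ge 2d+3$, and let $M$ be a missing $d$-face of $\mathcal{C}(\partial C_{2d+1}(n))$. Then $(\Delta_{2d+2})^{\le d}$ is a minor of $\mathcal{C}(\partial C_{2d+1}(n))^{\le d}\cup\{M\}$.
   Context: $\mathcal{C}(\partial C_{2d+1}(n))$ is the boundary complex of the cyclic $(2d+1)$-polytope on vertex set $[n]$; by Gale's evenness condition it is the simplicial complex on $[n]$ whose maximal simplices are the $(2d+1)$-element sets $S\subseteq[n]$ such that for all $i<j$ in $[n]\setminus S$ the number of elements of $S$ strictly between $i$ and $j$ is even. $K^{\le k}$ is the subcomplex of simplices of dimension at most $k$ (dimension of $F$ is $|F|-1$). A missing $k$-face of $K$ is a $(k+1)$-subset $M\subseteq V(K)$ with $M\notin K$ but all proper subsets of $M$ in $K$. $\Delta_m$ is the complex of all subsets of an $(m+1)$-element set. Minors (Nevo): a deletion replaces $K$ by a subcomplex; an admissible contraction identifies two distinct vertices $u,v$ of $K$ such that no missing $k$-face of $K$ with $k\le\dim K$ contains both $u$ and $v$, producing $L=\{F\in K: u\notin F\}\cup\{(F\setminus\{u\})\cup\{v\}: u\in F\in K\}$. $L$ is a minor of $K$ if it is obtained (up to isomorphism) from $K$ by a finite sequence of deletions and admissible contractions. *)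

From mathcomp Require Import all_boot.
Set Implicit Arguments. Unset Strict Implicit. Unset Printing Implicit Defensive.

Section Complexes.
Variable T : finType.
Implicit Types (K L : {set {set T}}) (F G M : {set T}) (u v : T).

Definition is_complex K : Prop :=
  forall F G, F \in K -> G \subset F -> G \in K.

Definition vertices K : {set T} := [set x | [set x] \in K].

Definition max_face_size K : nat := \max_(F in K) #|F|.

(* K^{<= k}: faces of dimension at most k, i.e. of size at most k+1 *)
Definition skeleton (k : nat) K : {set {set T}} := [set F in K | #|F| <= k.+1].

Definition missing_face K M : Prop :=
  M \subset vertices K /\ M \notin K /\ (forall N : {set T}, N \proper M -> N \in K).

Definition missing_kface (k : nat) K M : Prop :=
  #|M| = k.+1 /\ missing_face K M.

Definition contract K u v : {set {set T}} :=
  [set F in K | u \notin F] :|: [set (F :\ u) :|: [set v] | F in K & u \in F].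

Definition admissible_contraction K u v : Prop :=
  [/\ u != v, u \in vertices K, v \in vertices K &
      forall M : {set T}, missing_face K M -> #|M| <= max_face_size K ->
        ~ (u \in M /\ v \in M)].

Inductive minor_step K : {set {set T}} -> Prop :=
  | MS_delete L : is_complex L -> L \subset K -> minor_step K L
  | MS_contract u v : admissible_contraction K u v -> minor_step K (contract K u v).

Inductive minor_steps K : {set {set T}} -> Prop :=
  | MSS_refl : minor_steps K K
  | MSS_step L L' : minor_steps K L -> minor_step L L' -> minor_steps K L'.
End Complexes.

Definition isomorphic (T T' : finType) (K : {set {set T}}) (L : {set {set T'}}) : Prop :=
  exists f : T -> T', {in vertices K &, injective f} /\ L = [set f @: (F : {set T}) | F in K].

Definition is_minor (T' : finType) (L : {set {set T'}}) (T : finType) (K : {set {set T}}) : Prop :=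
  exists K' : {set {set T}}, minor_steps K K' /\ isomorphic K' L.

(* Gale's evenness condition for S subset of [n] = {0,...,n-1}, #|S| = m *)
Definition gale_facet (n m : nat) (S : {set 'I_n}) : bool :=
  (#|S| == m) &&
  [forall i : 'I_n, forall j : 'I_n,
     ((i \notin S) && (j \notin S) && (i < j)) ==>
       ~~ odd #|[set k in S | (i < k) && (k < j)]|].

Definition cyclic_boundary (d n : nat) : {set {set 'I_n}} :=
  [set F : {set 'I_n} | [exists S : {set 'I_n}, @gale_facet n (2 * d + 1) S && (F \subset S)]].

Definition simplex (m : nat) : {set {set 'I_m.+1}} := [set: {set 'I_m.+1}].

From mathcomp Require Import all_boot zify.
Set Implicit Arguments. Unset Strict Implicit. Unset Printing Implicit Defensive.

(* Close a set F of points of [n] under a pairing of consecutive points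
   (of either parity, leaving a point unpaired at an end).  The closure is
   Gale-even and has at most 2#|F| points, and at most 2#|F| - 1 when some
   point of F is paired with itself or with another point of F.  A (d+1)-set
   admits such a pairing unless it is separated by [n]: it avoids 0 and n-1
   and contains no two consecutive points.  Gale-even sets can be padded by
   their least missing point, so sets of size at most d and unseparated
   (d+1)-sets are faces; in particular every missing d-face M is separated.

   For V a subset of [n] let K(V) consist of the subsets of V of size at most
   d, the (d+1)-subsets of V not separated by V, and M.  K([n]) is a
   subcomplex of the complex in the statement.  Let u be a vertex of V outside
   V0 = {0} ∪ M ∪ (M+1) and v its predecessor in V.  Missing faces of K(V) are
   separated by V, so none contains both u and v and contracting u into v is
   admissible.  If a (d+1)-set G in V \ u is separated by V but not by V \ u,
   then v is in G and replacing v by u gives a face of K(V); hence the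
   contraction contains K(V \ u).  Iterating leaves K(V0).  On the 2d+3
   points of V0 the only separated (d+1)-subset is M, so K(V0) is the
   d-skeleton of a (2d+2)-simplex. *)

Lemma minor_steps_trans (T : finType) (K L L' : {set {set T}}) :
  minor_steps K L -> minor_steps L L' -> minor_steps K L'.
Proof. by move=> KL; elim=> // L1 L2 _ KL1 /(MSS_step KL1). Qed.

Lemma card_fixfree_involution_even (T : finType) (A : {set T}) (p : T -> T) :
  (forall k, k \in A -> [/\ p k \in A, p (p k) = k & p k != k]) -> ~~ odd #|A|.
Proof.
move=> pA; pose r := @enum_rank T.
set A1 := [set k in A | r k < r (p k)].
have A2E : [set k in A | r (p k) < r k] = p @: A1.
  apply/setP => k; apply/idP/imsetP => [|[j]].
    rewrite inE => /andP[kA lt]; have [pkA ppk _] := pA k kA.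
    by exists (p k); rewrite ?inE ?pkA ?ppk.
  rewrite /A1 inE => /andP[jA lt] ->; have [pjA ppj _] := pA j jA.
  by rewrite inE pjA ppj.
have p_inj : {in A1 &, injective p}.
  move=> x y; rewrite !inE => /andP[xA _] /andP[yA _] pxy.
  by have [_ <- _] := pA x xA; have [_ <- _] := pA y yA; rewrite pxy.
have AE : A = A1 :|: [set k in A | r (p k) < r k].
  apply/setP => k; rewrite !inE; case kA: (k \in A) => //=.
  have [_ _ pk_k] := pA k kA; rewrite -neq_ltn.
  by rewrite (inj_eq val_inj) (inj_eq enum_rank_inj) eq_sym.
have AI : A1 :&: [set k in A | r (p k) < r k] = set0.
  by apply/setP => k; rewrite !inE andbACA andbb; case: ltngtP; rewrite /= ?andbF.
by rewrite AE cardsU AI cards0 subn0 A2E card_in_imset // addnn odd_double.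
Qed.

Definition separated n (W G : {set 'I_n}) : bool :=
  [forall x in G, [exists y in W, y < x]] &&
  [forall x in G, [exists y in W, x < y]] &&
  [forall x in G, forall y in G, (x < y) ==> [exists z in W, (x < z) && (z < y)]].

Lemma separatedP n (W G : {set 'I_n}) : reflect
  [/\ forall x, x \in G -> exists2 y, y \in W & y < x,
      forall x, x \in G -> exists2 y, y \in W & x < y &
      forall x y, x \in G -> y \in G -> x < y -> exists2 z, z \in W & x < z < y]
  (separated W G).
Proof.
rewrite /separated -andbA.
apply: (iffP and3P) => [[/forall_inP h1 /forall_inP h2 /forall_inP h3]|[h1 h2 h3]].
  split=> [x /h1/exists_inP | x /h2/exists_inP | x y xG yG xy] //.
  by have /forall_inP/(_ y yG)/implyP/(_ xy)/exists_inP := h3 x xG.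
split; apply/forall_inP => x xG.
- by apply/exists_inP; apply: h1.
- by apply/exists_inP; apply: h2.
- by apply/forall_inP => y yG; apply/implyP => xy; apply/exists_inP; apply: h3.
Qed.

Section Gale.
Variable n : nat.
Implicit Types (S F : {set 'I_n}) (e : nat).

Definition gale_even S := [forall i : 'I_n, forall j : 'I_n,
  ((i \notin S) && (j \notin S) && (i < j)) ==>
    ~~ odd #|[set k in S | (i < k) && (k < j)]|].

Lemma gale_facetE m S : gale_facet m S = (#|S| == m) && gale_even S.
Proof. by []. Qed.

Lemma gale_evenP S : reflect
  (forall i j : 'I_n, i \notin S -> j \notin S -> i < j ->
     ~~ odd #|[set k in S | (i < k) && (k < j)]|)
  (gale_even S).
Proof.
apply: (iffP forallP) => [ev i j iS jS ij | ev i].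
  by have /forallP/(_ j)/implyP := ev i; apply; rewrite iS jS ij.
by apply/forallP => j; apply/implyP => /andP[/andP[iS jS] ij]; apply: ev.
Qed.

(* [partner e] pairs [2m - e] with [2m + 1 - e] and fixes the points left
   unpaired at the two ends of [0, n). *)
Definition partner e (k : 'I_n) : 'I_n :=
  insubd k (if odd (k + e) then k.-1 else k.+1).

Lemma val_partner e (k : 'I_n) : 0 < k -> k.+1 < n ->
  partner e k = (if odd (k + e) then k.-1 else k.+1) :> nat.
Proof. by move=> k_gt0 k_lt; rewrite /partner val_insubd ifT //; case: ifP; lia. Qed.

Lemma partnerK e : involutive (partner e).
Proof.
move=> k; apply: val_inj; have kn := ltn_ord k; rewrite /partner !val_insubd /=.
case ok: (odd (k + e)).
- have -> : k.-1 < n by lia.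
  have [k0|k_gt0] := posnP k; first by move: ok; rewrite k0 /= => ->; case: ifP.
  have -> : odd (k.-1 + e) = false by lia.
  by rewrite prednK // kn.
- have [kn'|kn'] := ltnP k.+1 n.
  + by rewrite /= ok /= kn.
  + by rewrite ok /= ltnNge kn'.
Qed.

Definition pair_closure e F := F :|: partner e @: F.

Lemma pair_closure_partner e F k :
  k \in pair_closure e F -> partner e k \in pair_closure e F.
Proof.
case/setUP=> [kF | /imsetP[x xF ->]]; rewrite inE ?partnerK ?xF //.
by rewrite imset_f ?orbT.
Qed.

Lemma gale_even_pair_closure e F : gale_even (pair_closure e F).
Proof.
apply/gale_evenP => i j iS jS ij.
apply: (card_fixfree_involution_even (p := partner e)).
move=> k; rewrite inE => /and3P[kS ik kj].
have pk := val_partner e (leq_ltn_trans (leq0n i) ik) (leq_ltn_trans kj (ltn_ord j)).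
have pkS := pair_closure_partner kS.
have pk_i : i != partner e k :> nat by apply: contraNneq iS => /val_inj ->.
have pk_j : j != partner e k :> nat by apply: contraNneq jS => /val_inj ->.
split.
- by rewrite inE pkS /=; move: pk pk_i pk_j; case: ifP => _; lia.
- exact: partnerK.
- by apply/eqP => /(congr1 (@nat_of_ord n)); move: pk; case: ifP => _; lia.
Qed.

Lemma card_pair_closure e F : #|pair_closure e F| <= 2 * #|F|.
Proof.
by rewrite mul2n -addnn (leq_trans (leq_card_setU _ _)) ?leq_add2l ?leq_imset_card.
Qed.

Lemma card_pair_closure_partner e F x :
  x \in F -> partner e x \in F -> #|pair_closure e F| < 2 * #|F|.
Proof.
move=> xF pxF; have closureE : pair_closure e F = F :|: partner e @: (F :\ x).
  apply/setP => k; rewrite !inE; apply/orP/orP => [[kF|/imsetP[y yF ->]]|]; [by left| |].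
    case: (eqVneq y x) => [->|yx]; first by left.
    by right; apply: imset_f; rewrite !inE yx.
  by case=> [kF|/imsetP[y /setD1P[_ yF] ->]]; [left|right; apply: imset_f].
rewrite closureE (leq_ltn_trans (leq_card_setU _ _)) // mul2n -addnn ltn_add2l.
by rewrite (leq_ltn_trans (leq_imset_card _ _)) // (cardsD1 x F) xF add1n ltnSn.
Qed.

Lemma gale_even_setU1_min S a : gale_even S -> a \notin S ->
  (forall b, b \notin S -> a <= b) -> gale_even (a |: S).
Proof.
move=> /gale_evenP ev aS amin; apply/gale_evenP => i j.
rewrite !in_setU1 !negb_or => /andP[ia iS] /andP[_ jS] ij.
have ai : a < i by rewrite ltn_neqAle amin // andbT; apply: contra ia => /eqP/val_inj->.
rewrite (_ : [set k in a |: S | _] = [set k in S | (i < k) && (k < j)]); first exact: ev.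
apply/setP => k; rewrite !inE; case: (eqVneq k a) => [->|] //=.
by rewrite (negbTE aS) ltnNge (ltnW ai).
Qed.

Lemma gale_even_extend S m : gale_even S -> #|S| <= m <= n ->
  exists2 S' : {set 'I_n}, S \subset S' & gale_facet m S'.
Proof.
move=> + /andP[+ lem]; move Ek: (m - #|S|) => k.
elim: k S Ek => [|k IH] S Sk ev leS.
  by exists S => //; rewrite gale_facetE ev andbT eqn_leq leS; lia.
have /subsetPn[a0 _ a0S] : ~~ ([set: 'I_n] \subset S).
  by apply/negP => /subset_leq_card; rewrite cardsT card_ord; lia.
case: (@arg_minnP _ a0 (fun a => a \notin S) val a0S) => a aS amin.
have card_aS : #|a |: S| = #|S|.+1 by rewrite cardsU1 aS.
have [||S' sub facetS'] := IH (a |: S) _ (gale_even_setU1_min ev aS amin); try lia.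
by exists S' => //; apply: subset_trans sub; apply: subsetUr.
Qed.

Lemma mem_cyclic_boundary d F S : 2 * d + 1 <= n -> gale_even S ->
  F \subset S -> #|S| <= 2 * d + 1 -> F \in cyclic_boundary d n.
Proof.
move=> dn ev FS cardS; have [|S' SS' facetS'] := gale_even_extend ev (m := 2 * d + 1).
  by rewrite cardS.
by rewrite inE; apply/existsP; exists S'; rewrite facetS' (subset_trans FS SS').
Qed.

Lemma small_mem_cyclic_boundary d F :
  2 * d + 1 <= n -> #|F| <= d -> F \in cyclic_boundary d n.
Proof.
move=> dn Fd; apply: (mem_cyclic_boundary dn (gale_even_pair_closure 0 F) (subsetUl _ _)).
by apply: leq_trans (card_pair_closure 0 F) _; lia.
Qed.

Lemma unseparated_partner F :
  ~~ separated setT F -> exists e, exists2 x, x \in F & partner e x \in F.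
Proof.
rewrite /separated !negb_and => /orP[/orP[]|] /forall_inPn[x xF].
- move=> /exists_inPn no_below; exists 1, x => //.
  have x0 : x = 0 :> nat.
    case: (posnP x) => // x_gt0.
    have := no_below (Ordinal (ltn_trans x_gt0 (ltn_ord x))) (in_setT _).
    by rewrite /= x_gt0.
  rewrite (_ : partner 1 x = x) //; apply: val_inj.
  by rewrite /partner val_insubd /= x0; case: ifP.
- move=> /exists_inPn no_above; exists (odd x), x => //.
  have xn : x.+1 = n.
    have [x_lt|] := ltnP x.+1 n; last by have := ltn_ord x; lia.
    by have := no_above (Ordinal x_lt) (in_setT _); rewrite /= ltnSn.
  rewrite (_ : partner _ x = x) //; apply: val_inj; rewrite /partner val_insubd /=.
  by case: ifP; case: ifP; lia.
- move=> /forall_inPn[y yF]; rewrite negb_imply => /andP[xy /exists_inPn no_between].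
  exists (odd x), x => //.
  have yx : y = x.+1 :> nat.
    apply/eqP; rewrite eqn_leq xy andbT leqNgt; apply/negP => x1y.
    have := no_between (Ordinal (ltn_trans x1y (ltn_ord y))) (in_setT _).
    by rewrite /= ltnSn x1y.
  rewrite (_ : partner _ x = y) //; apply: val_inj; rewrite /partner val_insubd /= yx.
  have := ltn_ord y; case: ifP; case: ifP; lia.
Qed.

Lemma unseparated_mem_cyclic_boundary d F : 2 * d + 1 <= n ->
  #|F| = d.+1 -> ~~ separated setT F -> F \in cyclic_boundary d n.
Proof.
move=> dn Fd /unseparated_partner[e [x xF pxF]].
apply: (mem_cyclic_boundary dn (gale_even_pair_closure e F) (subsetUl _ _)).
by have := card_pair_closure_partner xF pxF; lia.
Qed.
End Gale.

Lemma separated_setD1 n (V G : {set 'I_n}) (u v : 'I_n) :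
  v \in V -> v < u -> (forall z, z \in V -> z < u -> z <= v) ->
  G \subset V -> separated V G ->
  (v \in G -> separated V (u |: (G :\ v))) -> separated (V :\ u) G.
Proof.
move=> vV vu v_pred GV /separatedP[below above between] swap.
have vVu : v \in V :\ u by rewrite !inE vV andbT -val_eqE neq_ltn vu.
have Vu y : y \in V -> u < y -> y \in V :\ u.
  by move=> yV uy; rewrite !inE yV andbT -val_eqE neq_ltn uy orbT.
have lt_v x : x \in G -> x < u -> x != v -> x < v.
  by move=> xG xu xv; rewrite ltn_neqAle v_pred ?(subsetP GV) // andbT (inj_eq val_inj).
apply/separatedP; split.
- move=> x xG; have [y yV yx] := below x xG.
  case: (eqVneq y u) => [yu|yu]; last by exists y; rewrite ?inE ?yu.
  by exists v; rewrite // (ltn_trans vu) -?yu.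
- move=> x xG; have [y yV xy] := above x xG.
  case: (eqVneq y u) => [yu|yu]; last by exists y; rewrite ?inE ?yu.
  case: (eqVneq x v) => [xv|xv]; last by exists v; rewrite // lt_v -?yu.
  subst x; have /separatedP[_ above' _] := swap xG.
  have [y' y'V uy'] := above' u (setU11 _ _).
  by exists y'; [apply: Vu | rewrite (ltn_trans vu)].
- move=> x y xG yG xy; have [z zV /andP[xz zy]] := between x y xG yG xy.
  case: (eqVneq z u) => [zu|zu]; last by exists z; rewrite ?inE ?zu ?xz.
  subst z; case: (eqVneq x v) => [xv|xv].
    subst x; have /separatedP[_ _ between'] := swap xG.
    have yG' : y \in u |: (G :\ v).
      by apply/setU1P; right; rewrite !inE yG andbT -val_eqE neq_ltn xy orbT.
    have [w wV /andP[uw wy]] := between' u y (setU11 _ _) yG' zy.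
    by exists w; [apply: Vu | rewrite wy (ltn_trans vu uw)].
  by exists v; rewrite // (ltn_trans vu zy) lt_v.
Qed.

Section UnseparatedComplex.
Variables (n d : nat) (M : {set 'I_n}).
Implicit Types (V W G : {set 'I_n}).

Definition unsep_complex V : {set {set 'I_n}} :=
  [set G : {set 'I_n} | (G \subset V) &&
     ((#|G| <= d) || (#|G| == d.+1) && (~~ separated V G || (G == M)))].

Lemma unsep_complex_is_complex V : is_complex (unsep_complex V).
Proof.
move=> F G; rewrite !inE => /andP[FV hF] GF; rewrite (subset_trans GF FV) /=.
have [GF_lt|] := ltnP #|G| #|F|.
  case/orP: hF => [Fd|/andP[/eqP Fd _]]; first by rewrite (leq_trans (ltnW GF_lt) Fd).
  by rewrite -ltnS -Fd GF_lt.
by move=> FG; rewrite (_ : G = F) //; apply/eqP; rewrite eqEcard GF.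
Qed.

Lemma vertices_unsep_complex V : 0 < d -> vertices (unsep_complex V) = V.
Proof. by move=> d_gt0; apply/setP => x; rewrite !inE sub1set cards1 d_gt0 andbT. Qed.

Lemma max_face_size_unsep_complex V : max_face_size (unsep_complex V) <= d.+1.
Proof.
apply/bigmax_leqP => F; rewrite inE => /andP[_ /orP[|/andP[/eqP -> _]]] //.
exact: leqW.
Qed.

Section Contraction.
Variables (V : {set 'I_n}) (u v : 'I_n).
Hypotheses (uV : u \in V) (vV : v \in V) (vu : v < u)
           (v_pred : forall z, z \in V -> z < u -> z <= v).

Lemma admissible_contraction_pred :
  0 < d -> admissible_contraction (unsep_complex V) u v.
Proof.
move=> d_gt0; split; rewrite ?vertices_unsep_complex //.
  by rewrite -val_eqE neq_ltn vu orbT.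
move=> N [NV [NK _]] N_le [uN vN]; rewrite vertices_unsep_complex // in NV.
have N_size := leq_trans N_le (max_face_size_unsep_complex V).
move: NK; rewrite inE NV /= negb_or -ltnNge => /andP[N_gt].
rewrite eqn_leq N_gt N_size /= negb_or negbK => /andP[/separatedP[_ _ between] _].
have [z zV /andP[vz zu]] := between v u vN uN vu.
by have := v_pred zV zu; rewrite leqNgt vz.
Qed.

Lemma unsep_complex_setD1_sub_contract :
  unsep_complex (V :\ u) \subset contract (unsep_complex V) u v.
Proof.
apply/subsetP => G; rewrite inE => /andP[GVu hG].
have GV : G \subset V := subset_trans GVu (subD1set _ _).
have uG : u \notin G by apply/negP => /(subsetP GVu); rewrite !inE eqxx.
case GK: (G \in unsep_complex V); first by apply/setUP; left; rewrite inE GK uG.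
move: GK; rewrite inE GV /= => /negbT; rewrite negb_or -ltnNge => /andP[G_gt].
move: hG; rewrite leqNgt G_gt /= => /andP[G_size].
rewrite G_size negb_or negbK => + /andP[sepG GM]; rewrite (negbTE GM) orbF => unsepG.
have vG : v \in G.
  by apply: contraNT unsepG => vGn; apply: (separated_setD1 (v := v)) => // /(negP vGn).
have unsep_swap : ~~ separated V (u |: (G :\ v)).
  by apply: contra unsepG => sep; apply: (separated_setD1 (v := v)).
apply/setUP; right; apply/imsetP; exists (u |: (G :\ v)).
  rewrite !inE eqxx andbT subUset sub1set uV (subset_trans (subD1set _ _) GV) /=.
  rewrite cardsU1 !inE negb_and uG orbT (cardsD1 v G) vG in G_size *.
  by rewrite G_size unsep_swap orbT.
apply/setP => t; rewrite !inE.
case: (eqVneq t v) => [->|tv]; first by rewrite vG orbT.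
by case: (eqVneq t u) => [->|tu] /=; rewrite ?(negbTE uG) ?orbF.
Qed.
End Contraction.

Lemma unsep_complex_minor_steps W V : 0 < d -> W \subset V ->
  (forall u, u \in V -> u \notin W -> exists2 w, w \in W & w < u) ->
  minor_steps (unsep_complex V) (unsep_complex W).
Proof.
move=> d_gt0; elim: {V}_.+1 {-2}V (ltnSn #|V|) => // k IH V Vk WV below.
case: (eqVneq W V) => [->|WnV]; first exact: MSS_refl.
have [u uV uW] : exists2 u, u \in V & u \notin W.
  by apply/subsetPn; apply: contra WnV => VW; rewrite eqEsubset WV VW.
have [w wW wu] := below u uV uW.
have [|v /andP[vV vu] vmax] := @arg_maxnP _ w (fun y => (y \in V) && (y < u)) val.
  by rewrite (subsetP WV) ?wu.
have v_pred z : z \in V -> z < u -> z <= v by move=> zV zu; apply: vmax; rewrite zV.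
apply: minor_steps_trans (IH (V :\ u) _ _ _).
- have contract_u := MS_contract (admissible_contraction_pred uV vV vu v_pred d_gt0).
  have delete_rest := MS_delete (@unsep_complex_is_complex (V :\ u))
                        (unsep_complex_setD1_sub_contract uV vV vu v_pred).
  exact: MSS_step (MSS_step (MSS_refl _) contract_u) delete_rest.
- by rewrite (cardsD1 u V) uV in Vk.
- by rewrite subsetD1 WV.
- by move=> x /setD1P[_ xV]; apply: below.
Qed.
End UnseparatedComplex.

Section Spaced.
Variable N : nat.
Implicit Types (A B : {set 'I_N}).

Definition spaced A :=
  forall t t' : 'I_N, t \in A -> t' \in A -> t < t' -> t.+1 < t'.

Lemma spacedS A B : B \subset A -> spaced A -> spaced B.
Proof. by move=> /subsetP BA spA t t' /BA tA /BA t'A; apply: spA. Qed.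

Lemma card_spaced_le A a b :
  (forall t, t \in A -> a <= t < b) -> spaced A -> #|A| <= (b - a).+1./2.
Proof.
move=> range spA; pose h (t : 'I_N) := (t - a)./2.
rewrite cardE -(size_map h) -(size_iota 0 (b - a).+1./2); apply: uniq_leq_size.
  rewrite map_inj_in_uniq ?enum_uniq // => t t'; rewrite !mem_enum => tA t'A eq_half.
  have rt := range t tA; have rt' := range t' t'A; rewrite /h in eq_half.
  apply: val_inj; case: (ltngtP t t') => [lt|gt|//].
    by have := spA _ _ tA t'A lt; lia.
  by have := spA _ _ t'A tA gt; lia.
move=> _ /mapP[t + ->]; rewrite mem_enum mem_iota /h => /range; lia.
Qed.

Lemma spaced_odd k A : (forall t, t \in A -> 0 < t <= 2 * k + 1) -> spaced A ->
  #|A| = k.+1 -> forall t, t \in A -> odd t.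
Proof.
(* An even t0 in A leaves room for at most t0/2 - 1 points of A below it and
   k + 1 - t0/2 from it on. *)
move=> range spA cardA t0 t0A; apply/negPn/negP => even_t0.
have t0_range := range t0 t0A.
set L := [set t : 'I_N | t < t0].
have lo_range t : t \in A :&: L -> 1 <= t < t0.-1.
  by rewrite !inE => /andP[tA tt0]; have := spA _ _ tA t0A tt0; have := range t tA; lia.
have hi_range t : t \in A :\: L -> t0 <= t < 2 * k + 2.
  by rewrite !inE -leqNgt => /andP[t0t tA]; have := range t tA; lia.
have lo_le : #|A :&: L| <= (t0.-1 - 1).+1./2.
  exact: card_spaced_le lo_range (spacedS (subsetIl _ _) spA).
have hi_le : #|A :\: L| <= (2 * k + 2 - t0).+1./2.
  exact: card_spaced_le hi_range (spacedS (subsetDl _ _) spA).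
have card_split : #|A :&: L| + #|A :\: L| = k.+1 by rewrite cardsID.
lia.
Qed.
End Spaced.

Lemma imset_small_subsets (T T' : finType) (f : T -> T') (V : {set T}) (k : nat) :
  {in V &, injective f} -> f @: V = setT ->
  [set f @: (G : {set T}) | G in [set G : {set T} | (G \subset V) && (#|G| <= k)]] =
  [set H : {set T'} | #|H| <= k].
Proof.
move=> f_inj f_onto; apply/setP => H; rewrite inE; apply/imsetP/idP.
  case=> G; rewrite inE => /andP[_ Gk] ->; exact: leq_trans (leq_imset_card _ _) Gk.
move=> Hk; have fH : f @: (V :&: f @^-1: H) = H.
  apply/setP => h; apply/imsetP/idP => [[x /setIP[_]]|hH]; first by rewrite inE => + ->.
  have /imsetP[x xV hx] : h \in f @: V by rewrite f_onto.
  by exists x; rewrite // !inE xV -hx.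
have f_inj' : {in V :&: f @^-1: H &, injective f}.
  by apply: sub_in2 f_inj => x /setIP[].
exists (V :&: f @^-1: H) => //.
by rewrite inE subsetIl -(card_in_imset f_inj') fH.
Qed.

Section MissingFaceCore.
Variables (n d : nat) (M : {set 'I_n.+1}).
Hypotheses (cardM : #|M| = d.+1) (sepM : separated setT M).
Implicit Types (m y : 'I_n.+1) (G : {set 'I_n.+1}).

Definition M_succ : {set 'I_n.+1} := [set inord (nat_of_ord m).+1 | m in M].
Definition M_core : {set 'I_n.+1} := ord0 |: (M :|: M_succ).

Lemma M_gt0 m : m \in M -> 0 < m.
Proof. by case/separatedP: sepM => below _ _ /below[y _]; apply: leq_ltn_trans. Qed.

Lemma M_lt m : m \in M -> m < n.
Proof. by case/separatedP: sepM => _ above _ /above[y _ my]; have := ltn_ord y; lia. Qed.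

Lemma M_gap m m' : m \in M -> m' \in M -> m < m' -> m.+1 < m'.
Proof. by case/separatedP: sepM => _ _ between mM m'M /(between _ _ mM m'M)[z _]; lia. Qed.

Lemma val_M_succ m : m \in M -> (inord m.+1 : 'I_n.+1) = m.+1 :> nat.
Proof. by move=> mM; rewrite inordK // ltnS M_lt. Qed.

Lemma card_M_core : #|M_core| = 2 * d + 3.
Proof.
have disj : [disjoint M & M_succ].
  apply/pred0P => x /=; apply/andP => -[xM /imsetP[m mM xE]].
  by have := M_gap mM xM; rewrite xE val_M_succ // ltnn; lia.
have cardS : #|M_succ| = d.+1.
  rewrite card_in_imset -?cardM // => m m' mM m'M /(congr1 val).
  by rewrite /= !val_M_succ // => -[] /val_inj.
have ord0_out : ord0 \notin M :|: M_succ.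
  rewrite !inE negb_or; apply/andP; split; apply/negP; first by move/M_gt0.
  by case/imsetP=> m mM /(congr1 val); rewrite /= val_M_succ.
by rewrite cardsU1 ord0_out cardsU (disjoint_setI0 disj) cards0 cardM cardS; lia.
Qed.

(* [pos] enumerates M_core increasingly as 0, ..., 2d+2, with M at the odd
   positions. *)
Definition rankM y := #|[set m in M | m < y]|.
Definition pos y := 2 * rankM y + (y \in M).

Lemma rankM_le y : rankM y <= #|M|.
Proof. by apply: subset_leq_card; apply/subsetP => m; rewrite inE => /andP[]. Qed.

Lemma rankM_mem y : y \in M -> rankM y < #|M|.
Proof.
move=> yM; apply: proper_card; rewrite properE; apply/andP; split.
  by apply/subsetP => m; rewrite inE => /andP[].
by apply/subsetP => /(_ y yM); rewrite inE ltnn andbF.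
Qed.

Lemma rankM_lt y y' m : m \in M -> y <= m -> m < y' -> rankM y < rankM y'.
Proof.
move=> mM ym my'; apply: proper_card; rewrite properE; apply/andP; split.
  by apply/subsetP => k; rewrite !inE => /andP[-> /= ky]; apply: leq_trans ky _; lia.
by apply/subsetP => /(_ m); rewrite !inE mM my' ltnNge ym => /(_ isT).
Qed.

Lemma rankM_mono y y' : y <= y' -> rankM y <= rankM y'.
Proof.
move=> yy'; apply: subset_leq_card; apply/subsetP => k; rewrite !inE.
by case/andP=> -> /= ky; apply: leq_trans ky yy'.
Qed.

Lemma pos_le y : pos y <= 2 * d + 2.
Proof.
rewrite /pos; case: (boolP (y \in M)) => [yM|_]; last by have := rankM_le y; lia.
by have := rankM_mem yM; lia.
Qed.

Lemma pos_lt y y' : y' \in M_core -> y < y' -> pos y < pos y'.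
Proof.
move=> y'C yy'; rewrite /pos; case: (boolP (y \in M)) => [yM|yM].
  by have := rankM_lt yM (leqnn _) yy'; case: (y' \in M); lia.
case: (boolP (y' \in M)) => [y'M|y'M]; first by have := rankM_mono (ltnW yy'); lia.
move: y'C; rewrite !inE (negbTE y'M) /= => /orP[/eqP y'0|/imsetP[m mM y'E]].
  by move: yy'; rewrite y'0.
have my' : m < y' by rewrite y'E val_M_succ.
have ym : y <= m by move: yy'; rewrite y'E val_M_succ.
by have := rankM_lt mM ym my'; lia.
Qed.

Lemma ltn_pos : {in M_core &, {mono pos : y y' / y < y'}}.
Proof.
move=> y y' yC y'C; case: (ltngtP y y') => [yy'|y'y|/val_inj->]; last by rewrite ltnn.
  exact: pos_lt.
by apply/negbTE; rewrite -leqNgt ltnW // pos_lt.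
Qed.

Lemma pos_inj : {in M_core &, injective pos}.
Proof.
move=> y y' yC y'C eq_pos; apply: val_inj; case: (ltngtP y y') => [lt|gt|//].
  by have := ltn_pos yC y'C; rewrite eq_pos ltnn lt.
by have := ltn_pos y'C yC; rewrite eq_pos ltnn gt.
Qed.

Definition pos_ord y : 'I_(2 * d + 2).+1 := inord (pos y).

Lemma val_pos_ord y : pos_ord y = pos y :> nat.
Proof. by rewrite inordK // ltnS pos_le. Qed.

Lemma pos_ord_inj : {in M_core &, injective pos_ord}.
Proof.
move=> y y' yC y'C /(congr1 val); rewrite /= !val_pos_ord.
exact: pos_inj.
Qed.

Lemma pos_ord_onto : pos_ord @: M_core = setT.
Proof.
apply/eqP; rewrite eqEcard subsetT cardsT card_ord.
by rewrite (card_in_imset pos_ord_inj) card_M_core ltn_add2l.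
Qed.

Lemma separated_M_core G : G \subset M_core -> #|G| = d.+1 ->
  separated M_core G -> G = M.
Proof.
move=> GC cardG /separatedP[below above between].
have inC y : y \in G -> y \in M_core by move/(subsetP GC).
have odd_pos y : y \in G -> odd (pos y).
  move=> yG; rewrite -val_pos_ord.
  apply: (@spaced_odd _ d (pos_ord @: G)); last exact: imset_f.
  - move=> _ /imsetP[x xG ->]; rewrite val_pos_ord.
    have [z zC zx] := below x xG; have [z' z'C xz'] := above x xG.
    by have := pos_lt (inC _ xG) zx; have := pos_lt z'C xz'; have := pos_le z'; lia.
  - move=> _ _ /imsetP[x xG ->] /imsetP[x' x'G ->].
    rewrite !val_pos_ord ltn_pos ?inC // => xx'.
    have [z zC /andP[xz zx']] := between x x' xG x'G xx'.
    by have := pos_lt zC xz; have := pos_lt (inC _ x'G) zx'; lia.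
  - by rewrite card_in_imset // => x x' /inC xC /inC x'C; apply: pos_ord_inj.
have GM : G \subset M.
  by apply/subsetP => y /odd_pos; rewrite /pos; case: (y \in M) => //=; lia.
by apply/eqP; rewrite eqEcard GM cardG cardM /=.
Qed.

Lemma unsep_complex_M_core :
  unsep_complex d M M_core =
  [set G : {set 'I_n.+1} | (G \subset M_core) && (#|G| <= d.+1)].
Proof.
apply/setP => G; rewrite !inE; case: (boolP (G \subset M_core)) => //= GC.
case: (ltngtP #|G| d.+1) => [lt|gt|cardG]; first by rewrite -ltnS lt.
  by rewrite leqNgt (ltnW gt).
rewrite cardG ltnn /=; case: (boolP (separated M_core G)) => //=.
by move/(separated_M_core GC cardG) ->; rewrite eqxx.
Qed.

Lemma unsep_complex_M_core_iso : 0 < d ->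
  isomorphic (unsep_complex d M M_core) (skeleton d (simplex (2 * d + 2))).
Proof.
move=> d_gt0; exists pos_ord; rewrite vertices_unsep_complex //.
split; first exact: pos_ord_inj.
rewrite unsep_complex_M_core imset_small_subsets ?pos_ord_onto //; last exact: pos_ord_inj.
by apply/setP => H; rewrite !inE.
Qed.
End MissingFaceCore.

Lemma unsep_complex_setT_sub n d (M : {set 'I_n}) : 2 * d + 1 <= n ->
  unsep_complex d M setT \subset skeleton d (cyclic_boundary d n) :|: [set M].
Proof.
move=> dn; apply/subsetP => G; rewrite inE subsetT /= => hG.
case: (eqVneq G M) => [->|GM]; first by rewrite !inE eqxx orbT.
apply/setUP; left; rewrite inE.
case/orP: hG => [Gd|/andP[/eqP Gd]].
  by rewrite small_mem_cyclic_boundary // (leqW Gd).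
rewrite (negbTE GM) orbF Gd leqnn andbT; exact: unseparated_mem_cyclic_boundary.
Qed.

Theorem lemma2p13 (d n : nat) (M : {set 'I_n}) :
  1 <= d -> 2 * d + 3 <= n ->
  missing_kface d (cyclic_boundary d n) M ->
  is_minor (skeleton d (simplex (2 * d + 2)))
           (skeleton d (cyclic_boundary d n) :|: [set M]).
Proof.
case: n M => [|n] M d_gt0 dn [cardM [_ [MK _]]]; first by lia.
have sepM : separated setT M.
  by apply: contraNT MK => /(unseparated_mem_cyclic_boundary _ cardM); apply; lia.
exists (unsep_complex d M (M_core M)); split; last exact: unsep_complex_M_core_iso.
apply: minor_steps_trans (unsep_complex_minor_steps _ d_gt0 (subsetT _) _).
  apply: MSS_step (MSS_refl _) (MS_delete (@unsep_complex_is_complex _ _ _ _) _).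
  by apply: unsep_complex_setT_sub; lia.
move=> u _ uC; exists ord0; first by rewrite !inE eqxx.
rewrite lt0n; apply: contraNneq uC => u0.
by rewrite (_ : u = ord0) ?setU11 //; apply: val_inj.
Qed.
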